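(* Let $k \geq 1$ and $\Sigma = \{a_0, a_1, \ldots, a_{k-1}\}$. Consider the context-free grammar $G$ with terminal symbols $\Sigma \cup \{\epsilon, +, *, (, )\}$, start symbol $S$, non-terminals $S, E, E_i, Y, Y', Y_i, Y_i', Z, Z_i, P_i, P_i'$ (for $0 \le i < k$), and productions \begin{itemize} \item $S \to Y \mid Z$; \item $E \to Y \mid (Z) \mid (\epsilon + Y') \mid (\epsilon + Z)$; \item $E_i \to Y_i \mid (Z_i) \mid (\epsilon + Y_i') \mid (\epsilon + Z_i)$ for $0 \le i < k$; \item $Y \to P_i$ for each $0 \le i < k$; \item $Y' \to P_i'$ for each $0 \le i < k$; \item $Y_i \to P_j$ for all $0 \le i, j < k$ with $i \neq j$; \item $Y_i' \to P_j'$ for all $0 \le i, j < k$ with $i \neq j$; \item $Z \to P_{n_0}' + P_{n_1}' + \cdots + P_{n_t}'$ for all $t > 0$ and all $0 \le n_0 < n_1 < \cdots < n_t < k$; \item $Z_i \to P_{n_0}' + P_{n_1}' + \cdots + P_{n_t}'$ for all $t > 0$ and all $0 \le n_0 < n_1 < \cdots < n_t < k$ with $n_j \neq i$ for all $0 \le j \le t$; \item $P_i \to a_i \mid a_i E \mid a_i a_j * \mid a_i a_j * E_j$ for all $0 \le i, j < k$; \item $P_i' \to a_i \mid a_i E \mid a_i a_j * \mid a_i a_j * E_j$ for all $0 \le i, j < k$ with $i \neq j$. \end{itemize} Then $G$ is unambiguous, and any two distinct strings generated by $G$ (from $S$), read as regular expressions, denote distinct regular languages.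
   Context: Strings generated by the grammar are interpreted as regular expressions over $\Sigma$ in the usual way: $\epsilon$ denotes the empty word, $+$ is union, juxtaposition is concatenation, $*$ is Kleene star (applied here to the single preceding symbol $a_j$), with the standard precedence (star over concatenation over union) and parentheses for grouping. A context-free grammar is unambiguous if every string it generates has exactly one parse tree. *)

From mathcomp Require Import all_boot.
Set Implicit Arguments. Unset Strict Implicit. Unset Printing Implicit Defensive.

(** Terminal symbols: a_i (i : nat, only i < k are used), epsilon, +, *, (, ). *)
Inductive tok : Type := TA of nat | TEps | TPlus | TStar | TL | TR.

Inductive nt : Type :=
  | NS | NE | NEi of nat | NY | NY' | NYi of nat | NYi' of nat
  | NZ | NZi of nat | NP of nat | NP' of nat.

Inductive sym : Type := T of tok | N of nt.

Fixpoint sep_plus (s : seq sym) : seq sym :=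
  match s with
  | [::] => [::]
  | [:: x] => [:: x]
  | x :: s' => x :: T TPlus :: sep_plus s'
  end.

Inductive prodP (i : nat) (k : nat) : seq sym -> Prop :=
  | PP1 : prodP i k [:: T (TA i)]
  | PP2 : prodP i k [:: T (TA i); N NE]
  | PP3 j : j < k -> prodP i k [:: T (TA i); T (TA j); T TStar]
  | PP4 j : j < k -> prodP i k [:: T (TA i); T (TA j); T TStar; N (NEi j)].

Inductive prod (k : nat) : nt -> seq sym -> Prop :=
  | pS1 : prod k NS [:: N NY]
  | pS2 : prod k NS [:: N NZ]
  | pE1 : prod k NE [:: N NY]
  | pE2 : prod k NE [:: T TL; N NZ; T TR]
  | pE3 : prod k NE [:: T TL; T TEps; T TPlus; N NY'; T TR]
  | pE4 : prod k NE [:: T TL; T TEps; T TPlus; N NZ; T TR]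
  | pEi1 i : i < k -> prod k (NEi i) [:: N (NYi i)]
  | pEi2 i : i < k -> prod k (NEi i) [:: T TL; N (NZi i); T TR]
  | pEi3 i : i < k -> prod k (NEi i) [:: T TL; T TEps; T TPlus; N (NYi' i); T TR]
  | pEi4 i : i < k -> prod k (NEi i) [:: T TL; T TEps; T TPlus; N (NZi i); T TR]
  | pY i : i < k -> prod k NY [:: N (NP i)]
  | pY' i : i < k -> prod k NY' [:: N (NP' i)]
  | pYi i j : i < k -> j < k -> i != j -> prod k (NYi i) [:: N (NP j)]
  | pYi' i j : i < k -> j < k -> i != j -> prod k (NYi' i) [:: N (NP' j)]
  | pZ (ns : seq nat) : 2 <= size ns -> sorted ltn ns -> all (fun n => n < k) ns ->
      prod k NZ (sep_plus (map (fun n => N (NP' n)) ns))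
  | pZi i (ns : seq nat) : i < k -> 2 <= size ns -> sorted ltn ns ->
      all (fun n => n < k) ns -> i \notin ns ->
      prod k (NZi i) (sep_plus (map (fun n => N (NP' n)) ns))
  | pP i rhs : i < k -> prodP i k rhs -> prod k (NP i) rhs
  | pP' i j rhs : i < k -> j < k -> i != j ->
      (rhs = [:: T (TA i)] \/ rhs = [:: T (TA i); N NE] \/
       rhs = [:: T (TA i); T (TA j); T TStar] \/
       rhs = [:: T (TA i); T (TA j); T TStar; N (NEi j)]) ->
      prod k (NP' i) rhs.

Inductive ptree : Type := Leaf of tok | Node of nt & seq ptree.

Definition root (t : ptree) : sym :=
  match t with Leaf a => T a | Node A _ => N A end.

Fixpoint valid (k : nat) (t : ptree) : Prop :=
  match t with
  | Leaf _ => True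
  | Node A ts =>
      prod k A (map root ts) /\
      (fix validl (ts : seq ptree) : Prop :=
         match ts with [::] => True | t :: ts' => valid k t /\ validl ts' end) ts
  end.

Fixpoint yield (t : ptree) : seq tok :=
  match t with
  | Leaf a => [:: a]
  | Node _ ts =>
      (fix yieldl (ts : seq ptree) : seq tok :=
         match ts with [::] => [::] | t :: ts' => yield t ++ yieldl ts' end) ts
  end.

Definition parse_tree (k : nat) (t : ptree) (s : seq tok) : Prop :=
  valid k t /\ root t = N NS /\ yield t = s.

Definition generated (k : nat) (s : seq tok) : Prop := exists t, parse_tree k t s.

Definition unambiguous (k : nat) : Prop :=
  forall s, generated k s -> forall t1 t2, parse_tree k t1 s -> parse_tree k t2 s -> t1 = t2.

(** Regular expressions over Sigma = {a_0,...,a_{k-1}} and their languages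
    (words are sequences of letter indices). *)
Inductive regex : Type :=
  | REps | RSym of nat | RUnion of regex & regex | RCat of regex & regex | RStar of regex.

Inductive rmem : regex -> seq nat -> Prop :=
  | mEps : rmem REps [::]
  | mSym i : rmem (RSym i) [:: i]
  | mUl r1 r2 w : rmem r1 w -> rmem (RUnion r1 r2) w
  | mUr r1 r2 w : rmem r2 w -> rmem (RUnion r1 r2) w
  | mCat r1 r2 w1 w2 : rmem r1 w1 -> rmem r2 w2 -> rmem (RCat r1 r2) (w1 ++ w2)
  | mStar0 r : rmem (RStar r) [::]
  | mStarS r w1 w2 : rmem r w1 -> rmem (RStar r) w2 -> rmem (RStar r) (w1 ++ w2).

(** Reading a token string as a regular expression, with the usual precedence
    (star over concatenation over union) and parentheses for grouping. *)
Inductive readU (k : nat) : seq tok -> regex -> Prop :=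
  | rU1 s r : readC k s r -> readU k s r
  | rU2 s1 s2 r1 r2 : readU k s1 r1 -> readC k s2 r2 ->
      readU k (s1 ++ TPlus :: s2) (RUnion r1 r2)
with readC (k : nat) : seq tok -> regex -> Prop :=
  | rC1 s r : readS k s r -> readC k s r
  | rC2 s1 s2 r1 r2 : readC k s1 r1 -> readS k s2 r2 -> readC k (s1 ++ s2) (RCat r1 r2)
with readS (k : nat) : seq tok -> regex -> Prop :=
  | rS1 s r : readA k s r -> readS k s r
  | rS2 s r : readS k s r -> readS k (rcons s TStar) (RStar r)
with readA (k : nat) : seq tok -> regex -> Prop :=
  | rAsym i : i < k -> readA k [:: TA i] (RSym i)
  | rAeps : readA k [:: TEps] REps
  | rApar s r : readU k s r -> readA k (TL :: rcons s TR) r.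

Definition reads (k : nat) (s : seq tok) (r : regex) : Prop := readU k s r.

From mathcomp Require Import all_boot zify.
Set Implicit Arguments. Unset Strict Implicit. Unset Printing Implicit Defensive.

(* A parse tree of G is the tree of a syntax term: a sorted list of branches
   [a_i], [a_i E], [a_i a_j*] or [a_i a_j* E_j], where E is a parenthesised list
   of the same kind, possibly preceded by [epsilon +], and E_j has no branch at
   [a_j].  Every reading of the generated string as a regular expression has the
   language of this term, because brackets fix the parse of a regular expression
   up to associativity of + and concatenation.  Conversely the language
   determines the term: its first letters are the heads of the branches, the
   branch at [a_c] is read off the quotient by [a_c], the [epsilon +] flag is
   membership of the empty word, and [a_j* E_j] is recognised by invariance
   under the quotient by [a_j], which is where E_j must avoid [a_j] and where
   the primed [P_i'] forbid [a_i a_i*]. *)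

Scheme readU_mind := Induction for readU Sort Prop
with readC_mind := Induction for readC Sort Prop
with readS_mind := Induction for readS Sort Prop
with readA_mind := Induction for readA Sort Prop.
Combined Scheme read_mutind from readU_mind, readC_mind, readS_mind, readA_mind.

Lemma cat_eq_cat (A : Type) (p q a b : seq A) : p ++ q = a ++ b ->
  (exists m, a = p ++ m /\ q = m ++ b) \/ (exists m, p = a ++ m /\ b = m ++ q).
Proof.
elim: p a => [|x p IH] a /=; first by left; exists a.
case: a => [|y a] /= E; first by right; exists (x :: p).
case: E => -> /IH [[m [-> ->]]|[m [-> ->]]]; [left|right]; by exists m.
Qed.

Lemma cat_injl (A : Type) (s : seq A) : injective (cat s).
Proof. by elim: s => //= x s IH p q [/IH]. Qed.

Lemma size_cat_ltl (A : Type) (u v : seq A) : v <> [::] -> size u < size (u ++ v).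
Proof. by rewrite size_cat; case: v => //= x v _; lia. Qed.

Lemma size_cat_ltr (A : Type) (u v : seq A) : u <> [::] -> size v < size (u ++ v).
Proof. by rewrite size_cat; case: u => //= x u _; lia. Qed.

(** * Bracket structure of regular expression strings *)

Definition opens : seq tok -> nat := count (fun t => if t is TL then true else false).
Definition closes : seq tok -> nat := count (fun t => if t is TR then true else false).

Lemma opens_cat p q : opens (p ++ q) = opens p + opens q.
Proof. exact: count_cat. Qed.
Lemma closes_cat p q : closes (p ++ q) = closes p + closes q.
Proof. exact: count_cat. Qed.

Definition balanced s :=
  (forall p q, s = p ++ q -> closes p <= opens p) /\ opens s = closes s.

(* No proper prefix is balanced: [s] is a single letter or a parenthesised block. *)
Definition nested s :=
  forall p q, s = p ++ q -> p <> [::] -> q <> [::] -> closes p < opens p.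

Definition plus_nested s := forall p q, s = p ++ TPlus :: q -> closes p < opens p.

Definition atom_head (s : seq tok) :=
  if s is t :: _ then (if t is TA _ then True else if t is TEps then True else t = TL)
  else False.

Definition star_head_free (s : seq tok) := forall z, s <> TStar :: z.

Lemma balanced_cat a b : balanced a -> balanced b -> balanced (a ++ b).
Proof.
move=> [Ha Ea] [Hb Eb]; split; last by rewrite opens_cat closes_cat; lia.
move=> p q /cat_eq_cat [[m [-> E]]|[m [E _]]]; last exact: Ha E.
by rewrite opens_cat closes_cat; have := Hb m q E; lia.
Qed.

Lemma balanced_tok t : t <> TL -> t <> TR -> balanced [:: t].
Proof.
move=> nL nR; split; last by case: t nL nR.
move=> [|x [|y p]] q //= [<-]; by case: t nL nR.
Qed.

Lemma nested_tok t : nested [:: t].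
Proof. by move=> [|x [|y p]] [|z q]. Qed.

Lemma nested_paren u : balanced u -> nested (TL :: rcons u TR).
Proof.
move=> [Bu Eu] [|x p] q //= [<- E] _ q_ne; rewrite -cats1 in E.
have Hopen : forall v, closes (TL :: v) < opens (TL :: v) <-> closes v <= opens v.
  by move=> v; rewrite /opens /closes /=; lia.
apply/Hopen; case: (cat_eq_cat (esym E)) => [[m [Em _]]|[[|y m] [Em /= E2]]].
- exact: Bu Em.
- by rewrite Em cats0 Eu.
- by case: E2 => _; case: m Em => //= _; case: q q_ne E.
Qed.

Lemma balanced_paren u : balanced u -> balanced (TL :: rcons u TR).
Proof.
move=> Bu; have Nu := nested_paren Bu; case: Bu => _ Eu.
have Etot : opens (TL :: rcons u TR) = closes (TL :: rcons u TR).
  by move: Eu; rewrite -cats1 /opens /closes /= !count_cat /=; lia.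
split=> // -[|x p] [|y q] E //; first by rewrite cats0 in E; rewrite -E Etot.
by have /(_ ltac:(done) ltac:(done)) := Nu _ _ E; lia.
Qed.

Lemma plus_nested_cat a b :
  plus_nested a -> plus_nested b -> balanced a -> plus_nested (a ++ b).
Proof.
move=> Pa Pb [_ Ea] p q /esym /cat_eq_cat [[[|x m] [E1 E2]]|[m [-> E2]]].
- by have := Pb [::] q (esym E2).
- by case: E2 => Ex _; subst x; apply: (Pa p m).
- by rewrite opens_cat closes_cat; have := Pb m q E2; lia.
Qed.

Lemma plus_nested_tok t : t <> TPlus -> plus_nested [:: t].
Proof.
move=> nP [|x p] q /= [E]; first by rewrite E in nP.
by move/(f_equal size); rewrite size_cat /=; lia.
Qed.

Lemma plus_nested_of_nested s : nested s -> atom_head s -> plus_nested s.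
Proof. by move=> Ns Hs [|x p] q E; [rewrite E in Hs | apply: (Ns _ (TPlus :: q) E)]. Qed.

Lemma atom_head_cat a b : atom_head a -> atom_head (a ++ b).
Proof. by case: a. Qed.

Lemma atom_head_neq_nil s : atom_head s -> s <> [::].
Proof. by case: s. Qed.

Lemma atom_head_star_free s : atom_head s -> star_head_free s.
Proof. by case: s => [|[]] //= ? ? ? []. Qed.

Definition atom_shape s := [/\ balanced s, atom_head s & nested s].
Definition cat_shape s := [/\ balanced s, atom_head s & plus_nested s].
Definition union_shape s := balanced s /\ atom_head s.

Lemma read_shapes k :
  (forall s r, readU k s r -> union_shape s) /\
  (forall s r, readC k s r -> cat_shape s) /\
  (forall s r, readS k s r -> cat_shape s) /\
  (forall s r, readA k s r -> atom_shape s).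
Proof.
apply: (read_mutind (P := fun s _ _ => union_shape s) (P0 := fun s _ _ => cat_shape s)
  (P1 := fun s _ _ => cat_shape s) (P2 := fun s _ _ => atom_shape s)).
- by move=> s r _ [].
- move=> s1 s2 r1 r2 _ [B1 H1] _ [B2 _ _]; split; last exact: atom_head_cat.
  by apply: balanced_cat => //; apply: (@balanced_cat [:: TPlus]) => //; exact: balanced_tok.
- by move=> s r _ [].
- move=> s1 s2 r1 r2 _ [B1 H1 P1] _ [B2 _ P2]; split.
  + exact: balanced_cat.
  + exact: atom_head_cat.
  + exact: plus_nested_cat.
- by move=> s r _ [B H N]; split=> //; exact: plus_nested_of_nested.
- move=> s r _ [B H P]; rewrite -cats1; split.
  + by apply: balanced_cat => //; exact: balanced_tok.
  + exact: atom_head_cat.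
  + by apply: plus_nested_cat => //; exact: plus_nested_tok.
- by move=> i _; split=> //; [exact: balanced_tok|exact: nested_tok].
- by split=> //; [exact: balanced_tok|exact: nested_tok].
- by move=> s r _ [B _]; split=> //; [exact: balanced_paren|exact: nested_paren].
Qed.

(** * Readings of a string are unique up to language *)

Definition eqlang (A B : seq nat -> Prop) := forall w, A w <-> B w.

Lemma eqlang_refl A : eqlang A A. Proof. by []. Qed.
Lemma eqlang_sym A B : eqlang A B -> eqlang B A.
Proof. by move=> E w; rewrite E. Qed.
Lemma eqlang_trans A B C : eqlang A B -> eqlang B C -> eqlang A C.
Proof. by move=> E1 E2 w; rewrite E1. Qed.

Lemma rmem_eps w : rmem REps w <-> w = [::].
Proof. by split=> [H|->]; [inversion H|constructor]. Qed.

Lemma rmem_sym i w : rmem (RSym i) w <-> w = [:: i].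
Proof. by split=> [H|->]; [inversion H|constructor]. Qed.

Lemma rmem_union r1 r2 w : rmem (RUnion r1 r2) w <-> rmem r1 w \/ rmem r2 w.
Proof.
split; first by move=> H; inversion H; [left|right].
by case=> H; [apply: mUl|apply: mUr].
Qed.

Lemma rmem_cat r1 r2 w :
  rmem (RCat r1 r2) w <-> exists w1 w2, [/\ w = w1 ++ w2, rmem r1 w1 & rmem r2 w2].
Proof.
split; first by move=> H; inversion H; exists w1, w2.
by case=> w1 [w2 [-> H1 H2]]; apply: mCat.
Qed.

Lemma rmem_star_sym j w : rmem (RStar (RSym j)) w <-> exists n, w = nseq n j.
Proof.
split.
- move=> H; remember (RStar (RSym j)) as r eqn:Er; elim: H Er => // {w r}.
  + by move=> r _; exists 0.
  + move=> r w1 w2 H1 _ _ IH [Er]; subst r; case: (IH erefl) => n ->.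
    by move/rmem_sym: H1 => ->; exists n.+1.
- case=> n ->; elim: n => [|n IH]; first exact: mStar0.
  by apply: (@mStarS _ [:: j]) => //; apply/rmem_sym.
Qed.

Lemma eqlang_union a1 a2 b1 b2 :
  eqlang (rmem a1) (rmem a2) -> eqlang (rmem b1) (rmem b2) ->
  eqlang (rmem (RUnion a1 b1)) (rmem (RUnion a2 b2)).
Proof. by move=> Ea Eb w; rewrite !rmem_union Ea Eb. Qed.

Lemma eqlang_cat a1 a2 b1 b2 :
  eqlang (rmem a1) (rmem a2) -> eqlang (rmem b1) (rmem b2) ->
  eqlang (rmem (RCat a1 b1)) (rmem (RCat a2 b2)).
Proof.
by move=> Ea Eb w; rewrite !rmem_cat; split=> -[w1 [w2 [-> H1 H2]]];
  exists w1, w2; split; rewrite ?Ea ?Eb // -?Ea -?Eb.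
Qed.

Lemma eqlang_catA a b c : eqlang (rmem (RCat (RCat a b) c)) (rmem (RCat a (RCat b c))).
Proof.
move=> w; rewrite !rmem_cat; split.
- case=> w1 [w2 [-> /rmem_cat [u1 [u2 [-> H1 H2]]] H3]].
  by exists u1, (u2 ++ w2); rewrite catA; split=> //; apply/rmem_cat; exists u2, w2.
- case=> w1 [w2 [-> H1 /rmem_cat [u1 [u2 [-> H2 H3]]]]].
  by exists (w1 ++ u1), u2; rewrite catA; split=> //; apply/rmem_cat; exists w1, u1.
Qed.

Lemma eqlang_unionA a b c : eqlang (rmem (RUnion (RUnion a b) c)) (rmem (RUnion a (RUnion b c))).
Proof. by move=> w; rewrite !rmem_union; tauto. Qed.

Lemma eqlang_star a b : eqlang (rmem a) (rmem b) -> eqlang (rmem (RStar a)) (rmem (RStar b)).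
Proof.
suff sub a1 a2 : eqlang (rmem a1) (rmem a2) -> forall w, rmem (RStar a1) w -> rmem (RStar a2) w.
  by move=> E w; split; apply: sub => //; exact: eqlang_sym.
move=> E w H; remember (RStar a1) as r eqn:Er; elim: H Er => // {w r}.
- by move=> r _; constructor.
- by move=> r w1 w2 H1 _ _ IH [Er]; subst r; apply: mStarS; [rewrite -E|exact: IH].
Qed.

Lemma readS_atom_stars k s r : readS k s r ->
  exists a ra n, [/\ readA k a ra, s = a ++ nseq n TStar & r = iter n RStar ra].
Proof.
elim=> {s r} [s r A|s r _ [a [ra [n [A -> ->]]]]]; first by exists s, r, 0; rewrite cats0.
by exists a, ra, n.+1; rewrite rcons_cat -cats1 -(nseqD n 1) addn1.
Qed.

Lemma readC_first k s r : readC k s r -> readS k s r \/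
  exists s1 s2 r1 r2,
    [/\ s = s1 ++ s2, readS k s1 r1, readC k s2 r2 & eqlang (rmem r) (rmem (RCat r1 r2))].
Proof.
elim=> {s r} [s r H|s1 s2 r1 r2 _ [H1|[t1 [t2 [q1 [q2 [-> Ht1 Ht2 E]]]]]] H2]; first by left.
all: right.
- by exists s1, s2, r1, r2; split=> //; constructor.
- exists t1, (t2 ++ s2), q1, (RCat q2 r2); rewrite catA; split=> //; first exact: rC2.
  by apply: eqlang_trans (eqlang_catA _ _ _); apply: eqlang_cat.
Qed.

Lemma readU_first k s r : readU k s r -> readC k s r \/
  exists s1 s2 r1 r2,
    [/\ s = s1 ++ TPlus :: s2, readC k s1 r1, readU k s2 r2 &
         eqlang (rmem r) (rmem (RUnion r1 r2))].
Proof.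
elim=> {s r} [s r H|s1 s2 r1 r2 _ [H1|[t1 [t2 [q1 [q2 [-> Ht1 Ht2 E]]]]]] H2]; first by left.
all: right.
- by exists s1, s2, r1, r2; split=> //; constructor.
- exists t1, (t2 ++ TPlus :: s2), q1, (RUnion q2 r2); rewrite -catA; split=> //.
  + exact: rU2.
  + by apply: eqlang_trans (eqlang_unionA _ _ _); apply: eqlang_union.
Qed.

(* Being nested, a reading of an atom cannot be a proper prefix of another. *)
Lemma readA_prefix k a1 a2 x y r1 r2 :
  readA k a1 r1 -> readA k a2 r2 -> a1 ++ x = a2 ++ y -> a1 = a2.
Proof.
have [_ [_ [_ HA]]] := read_shapes k.
move=> /HA [[_ E1] H1 N1] /HA [[_ E2] H2 N2] /cat_eq_cat.
case=> [[[|z m] [E _]]|[[|z m] [E _]]]; rewrite ?E ?cats0 //.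
- by have := N2 a1 (z :: m) E (atom_head_neq_nil H1) ltac:(done); lia.
- by have := N1 a2 (z :: m) E (atom_head_neq_nil H2) ltac:(done); lia.
Qed.

Lemma readS_prefix k u1 u2 x y r1 r2 : readS k u1 r1 -> readS k u2 r2 ->
  star_head_free x -> star_head_free y -> u1 ++ x = u2 ++ y -> u1 = u2.
Proof.
move=> /readS_atom_stars [a1 [q1 [n1 [A1 -> _]]]] /readS_atom_stars [a2 [q2 [n2 [A2 -> _]]]].
move=> Fx Fy; rewrite -!catA => E; have Ea := readA_prefix A1 A2 E; subst a2.
congr (_ ++ _); move/cat_injl: E; elim: n1 n2 => [|n1 IH] [|n2] //= E.
- by case: (Fx _ E).
- by case: (Fy _ (esym E)).
- by case: E => /IH ->.
Qed.

Lemma eqlang_iter_star n a b :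
  eqlang (rmem a) (rmem b) -> eqlang (rmem (iter n RStar a)) (rmem (iter n RStar b)).
Proof. by move=> E; elim: n => //= n IH; apply: eqlang_star. Qed.

Definition readings_agree k s :=
  [/\ forall r1 r2, readA k s r1 -> readA k s r2 -> eqlang (rmem r1) (rmem r2),
      forall r1 r2, readS k s r1 -> readS k s r2 -> eqlang (rmem r1) (rmem r2),
      forall r1 r2, readC k s r1 -> readC k s r2 -> eqlang (rmem r1) (rmem r2) &
      forall r1 r2, readU k s r1 -> readU k s r2 -> eqlang (rmem r1) (rmem r2)].

Section ReadingsAgree.
Variables (k : nat) (s : seq tok).
Hypothesis IH : forall u, size u < size s -> readings_agree k u.

Lemma readA_agree r1 r2 : readA k s r1 -> readA k s r2 -> eqlang (rmem r1) (rmem r2).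
Proof.
move=> H1 H2; inversion H1; subst; inversion H2; subst; try exact: eqlang_refl.
match goal with E : rcons ?u1 TR = rcons ?u2 TR |- _ =>
  case/rcons_inj: E => E; subst u2 end.
match goal with U : readU k ?u _ |- _ =>
  have [_ _ _] := IH (u := u) ltac:(rewrite /= size_rcons; lia) end.
exact.
Qed.

Lemma readS_agree r1 r2 : readS k s r1 -> readS k s r2 -> eqlang (rmem r1) (rmem r2).
Proof.
move=> /readS_atom_stars [a1 [q1 [n1 [A1 E1 ->]]]].
move=> /readS_atom_stars [a2 [q2 [n2 [A2 E2 ->]]]].
have Ea : a1 = a2.
  by apply: (readA_prefix A1 A2 (x := nseq n1 TStar) (y := nseq n2 TStar)); rewrite -E1 -E2.
subst a2; have En : n1 = n2.
  by move: E2; rewrite E1 => /cat_injl /(f_equal size); rewrite !size_nseq.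
subst n2; apply: eqlang_iter_star; case: n1 E1 {E2} => [|n] E1.
- by apply: readA_agree; rewrite E1 ?cats0.
- have [hA _ _ _] := IH (u := a1) ltac:(by rewrite E1 size_cat size_nseq; lia).
  exact: hA.
Qed.

Lemma readC_agree r1 r2 : readC k s r1 -> readC k s r2 -> eqlang (rmem r1) (rmem r2).
Proof.
have [_ [HC [HS _]]] := read_shapes k.
have single_vs_cat r u v p1 p2 : readS k s r -> readS k u p1 -> readC k v p2 ->
    s = u ++ v -> False.
  move=> H Hu Hv E; have [_ Hv0 _] := HC _ _ Hv.
  have Eu := readS_prefix (x := [::]) H Hu ltac:(by []) (atom_head_star_free Hv0).
  rewrite cats0 -E in Eu; move: E; rewrite {1}(Eu erefl) -{1}[u]cats0 => /cat_injl Ev.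
  by subst v; case: Hv0.
move=> /readC_first [H1|[u1 [v1 [p1 [q1 [E1 Hu1 Hv1 R1]]]]]].
all: move=> /readC_first [H2|[u2 [v2 [p2 [q2 [E2 Hu2 Hv2 R2]]]]]].
- exact: readS_agree.
- by case: (single_vs_cat r1 _ _ _ _ H1 Hu2 Hv2 E2).
- by case: (single_vs_cat r2 _ _ _ _ H2 Hu1 Hv1 E1).
have [_ Hv1' _] := HC _ _ Hv1; have [_ Hv2' _] := HC _ _ Hv2.
have Eu : u1 = u2.
  apply: (readS_prefix Hu1 Hu2 (atom_head_star_free Hv1') (atom_head_star_free Hv2')).
  by rewrite -E1 -E2.
subst u2; move: E2; rewrite E1 => /cat_injl Ev; subst v2.
apply: eqlang_trans R1 _; apply: eqlang_trans _ (eqlang_sym R2); apply: eqlang_cat.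
- have [_ hS _ _] := IH (u := u1) ltac:(by rewrite E1; apply/size_cat_ltl/atom_head_neq_nil).
  exact: hS.
- have [_ Hu1' _] := HS _ _ Hu1.
  have [_ _ hC _] := IH (u := v1) ltac:(by rewrite E1; apply/size_cat_ltr/atom_head_neq_nil).
  exact: hC.
Qed.

Lemma readU_agree r1 r2 : readU k s r1 -> readU k s r2 -> eqlang (rmem r1) (rmem r2).
Proof.
have [_ [HC _]] := read_shapes k.
have cat_vs_union r u v p : readC k s r -> readC k u p -> s = u ++ TPlus :: v -> False.
  move=> /HC [_ _ P] /HC [[_ B] _ _] /P; lia.
move=> /readU_first [H1|[u1 [v1 [p1 [q1 [E1 Hu1 Hv1 R1]]]]]].
all: move=> /readU_first [H2|[u2 [v2 [p2 [q2 [E2 Hu2 Hv2 R2]]]]]].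
- exact: readC_agree.
- by case: (cat_vs_union _ _ _ _ H1 Hu2 E2).
- by case: (cat_vs_union _ _ _ _ H2 Hu1 E1).
have [[_ B1] _ P1] := HC _ _ Hu1; have [[_ B2] _ P2] := HC _ _ Hu2.
have Eu : u1 = u2.
  case: (cat_eq_cat (etrans (esym E1) E2)) => [[[|x m] [Em E]]|[[|x m] [Em E]]];
    rewrite ?Em ?cats0 //; case: E => Ex _; subst x.
  - by have := P2 u1 m Em; lia.
  - by have := P1 u2 m Em; lia.
subst u2; move: E2; rewrite E1 => /cat_injl [Ev]; subst v2.
apply: eqlang_trans R1 _; apply: eqlang_trans _ (eqlang_sym R2); apply: eqlang_union.
- have [_ _ hC _] : readings_agree k u1 by apply: IH; rewrite E1 size_cat /=; lia.
  exact: hC.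
- have [_ _ _ hU] : readings_agree k v1 by apply: IH; rewrite E1 size_cat /=; lia.
  exact: hU.
Qed.

End ReadingsAgree.

Lemma readings_agreeP k s : readings_agree k s.
Proof.
elim: {s}(size s).+1 {-2}s (ltnSn (size s)) => [//|n IHn] s s_lt.
have IH u : size u < size s -> readings_agree k u by move=> u_lt; apply: IHn; lia.
split; [exact: readA_agree|exact: readS_agree|exact: readC_agree|exact: readU_agree].
Qed.

Lemma reads_lang_eq k s r1 r2 : reads k s r1 -> reads k s r2 -> eqlang (rmem r1) (rmem r2).
Proof. by case: (readings_agreeP k s) => _ _ _; apply. Qed.

(** * Abstract syntax of the strings of G *)

(* [tail] is what follows [a_i] in a production of [P_i]/[P_i'], [group] is an
   [E]/[E_j] with its flag for the [epsilon +] option, and [alts] is the list of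
   branches [a_i tail] separated by [+]. *)
Inductive tail := Tail0 | TailE of group | TailStar of nat | TailStarE of nat & group
with group := Group of bool & alts
with alts := Alt0 | AltCons of nat & tail & alts.

Scheme tail_mind := Induction for tail Sort Prop
with group_mind := Induction for group Sort Prop
with alts_mind := Induction for alts Sort Prop.
Combined Scheme syntax_mind from tail_mind, group_mind, alts_mind.

Fixpoint heads l := if l is AltCons i _ l' then i :: heads l' else [::].

Definition group_heads g := let: Group _ l := g in heads l.

Definition single_alt l := if l is AltCons _ _ Alt0 then true else false.

(* [wf_tail k p i t]: [t] follows [a_i] in [P_i] ([p = false]) or [P_i'] ([p = true]);
   [wf_group k x g]: [g] comes from [E] ([x = None]) or [E_j] ([x = Some j]). *)
Fixpoint wf_tail k (p : bool) (i : nat) t :=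
  match t with
  | Tail0 => True
  | TailE g => wf_group k None g
  | TailStar j => j < k /\ (p -> j <> i)
  | TailStarE j g => [/\ j < k, p -> j <> i & wf_group k (Some j) g]
  end
with wf_group k x g :=
  let: Group b l := g in
  [/\ 0 < size (heads l), sorted ltn (heads l), all (gtn k) (heads l),
      (forall j, x = Some j -> j \notin heads l) & wf_alts k (b || (1 < size (heads l))) l]
with wf_alts k p l :=
  if l is AltCons i t l' then wf_tail k p i t /\ wf_alts k p l' else True.

Fixpoint print_tail t : seq tok :=
  match t with
  | Tail0 => [::]
  | TailE g => print_group g
  | TailStar j => [:: TA j; TStar]
  | TailStarE j g => [:: TA j, TStar & print_group g]
  end
with print_group g :=
  let: Group b l := g in
  if b then TL :: TEps :: TPlus :: print_alts l ++ [:: TR]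
  else if single_alt l then print_alts l else TL :: print_alts l ++ [:: TR]
with print_alts l :=
  if l is AltCons i t l' then
    TA i :: print_tail t ++ (if l' is Alt0 then [::] else TPlus :: print_alts l')
  else [::].

Fixpoint tail_lang t (w : seq nat) : Prop :=
  match t with
  | Tail0 => w = [::]
  | TailE g => group_lang g w
  | TailStar j => exists n, w = nseq n j
  | TailStarE j g => exists n w', w = nseq n j ++ w' /\ group_lang g w'
  end
with group_lang g w := let: Group b l := g in (b /\ w = [::]) \/ alts_lang l w
with alts_lang l w :=
  if l is AltCons i t l' then (exists w', w = i :: w' /\ tail_lang t w') \/ alts_lang l' w
  else False.

(** * Printed syntax reads as its language *)

Definition cons_lang i (L : seq nat -> Prop) w := exists w', w = i :: w' /\ L w'.

Lemma readC_cat k s1 s2 r1 r2 : readC k s1 r1 -> readC k s2 r2 ->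
  exists r, readC k (s1 ++ s2) r /\ eqlang (rmem r) (rmem (RCat r1 r2)).
Proof.
move=> H1; elim=> {s2 r2} [s r H|t1 t2 q1 q2 _ [r [Hr Er]] H2].
- by exists (RCat r1 r); split; [exact: rC2|exact: eqlang_refl].
- exists (RCat r q2); rewrite catA; split; first exact: rC2.
  by apply: eqlang_trans (eqlang_catA _ _ _); apply: eqlang_cat.
Qed.

Lemma readU_union k s1 s2 r1 r2 : readU k s1 r1 -> readU k s2 r2 ->
  exists r, readU k (s1 ++ TPlus :: s2) r /\ eqlang (rmem r) (rmem (RUnion r1 r2)).
Proof.
move=> H1; elim=> {s2 r2} [s r H|t1 t2 q1 q2 _ [r [Hr Er]] H2].
- by exists (RUnion r1 r); split; [exact: rU2|exact: eqlang_refl].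
- exists (RUnion r q2); split.
  + by rewrite -[_ :: t1 ++ _]/((TPlus :: t1) ++ _) catA; exact: rU2.
  + by apply: eqlang_trans (eqlang_unionA _ _ _); apply: eqlang_union.
Qed.

Lemma readC_paren k s r : readU k s r -> readC k (TL :: s ++ [:: TR]) r.
Proof. by rewrite cats1 => H; do 2 constructor; exact: rApar. Qed.

Lemma readC_letter k i : i < k -> readC k [:: TA i] (RSym i).
Proof. by move=> ik; do 2 constructor; exact: rAsym. Qed.

Lemma readC_letter_star k i j : i < k -> j < k ->
  readC k [:: TA i; TA j; TStar] (RCat (RSym i) (RStar (RSym j))).
Proof.
move=> ik jk; apply: (@rC2 k [:: TA i] [:: TA j; TStar]); first exact: readC_letter.
by apply: (@rS2 k [:: TA j]); constructor; exact: rAsym.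
Qed.

Lemma reads_tail0 k i : i < k ->
  exists r, readC k (TA i :: print_tail Tail0) r /\ eqlang (rmem r) (cons_lang i (tail_lang Tail0)).
Proof.
move=> ik; exists (RSym i); split; first exact: readC_letter.
by move=> w; rewrite rmem_sym; split=> [->|[w' [-> ->]]]; first by exists [::].
Qed.

Lemma reads_tailE k i g rg : i < k -> readC k (print_group g) rg ->
  eqlang (rmem rg) (group_lang g) ->
  exists r, readC k (TA i :: print_tail (TailE g)) r /\
            eqlang (rmem r) (cons_lang i (tail_lang (TailE g))).
Proof.
move=> ik Hg Dg; have [r [Hr Er]] := readC_cat (readC_letter ik) Hg.
exists r; split=> // w; rewrite Er rmem_cat; split.
- by case=> w1 [w2 [-> /rmem_sym -> /Dg H2]]; exists w2.
- by case=> w' [-> /Dg H]; exists [:: i], w'; split=> //; exact/rmem_sym.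
Qed.

Lemma reads_tailStar k i j : i < k -> j < k ->
  exists r, readC k (TA i :: print_tail (TailStar j)) r /\
            eqlang (rmem r) (cons_lang i (tail_lang (TailStar j))).
Proof.
move=> ik jk; exists (RCat (RSym i) (RStar (RSym j))); split; first exact: readC_letter_star.
move=> w; rewrite rmem_cat; split.
- by case=> w1 [w2 [-> /rmem_sym -> /rmem_star_sym H]]; exists w2.
- by case=> w' [-> H]; exists [:: i], w'; split; [|exact/rmem_sym|exact/rmem_star_sym].
Qed.

Lemma reads_tailStarE k i j g rg : i < k -> j < k -> readC k (print_group g) rg ->
  eqlang (rmem rg) (group_lang g) ->
  exists r, readC k (TA i :: print_tail (TailStarE j g)) r /\
            eqlang (rmem r) (cons_lang i (tail_lang (TailStarE j g))).
Proof.
move=> ik jk Hg Dg; have [r [Hr Er]] := readC_cat (readC_letter_star ik jk) Hg.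
exists r; split=> // w; rewrite Er rmem_cat; split.
- case=> w1 [w2 [-> /rmem_cat [u1 [u2 [-> /rmem_sym -> /rmem_star_sym [n ->]]]] /Dg H2]].
  by exists (nseq n j ++ w2); split=> //; exists n, w2.
- case=> w' [-> [n [w'' [-> H]]]]; exists (i :: nseq n j), w''; split=> //; last exact/Dg.
  apply/rmem_cat; exists [:: i], (nseq n j).
  by split; [|exact/rmem_sym|apply/rmem_star_sym; exists n].
Qed.

Lemma print_reads k :
  (forall t p i, i < k -> wf_tail k p i t ->
     exists r, readC k (TA i :: print_tail t) r /\ eqlang (rmem r) (cons_lang i (tail_lang t))) /\
  (forall g x, wf_group k x g ->
     exists r, readC k (print_group g) r /\ eqlang (rmem r) (group_lang g)) /\
  (forall l p, wf_alts k p l -> all (gtn k) (heads l) -> l <> Alt0 ->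
     exists r, [/\ readU k (print_alts l) r, eqlang (rmem r) (alts_lang l) &
                   single_alt l -> readC k (print_alts l) r]).
Proof.
apply: syntax_mind => //=.
- by move=> p i ik _; exact: reads_tail0.
- by move=> g IHg p i ik /IHg [r [Hr Dr]]; exact: reads_tailE Hr Dr.
- by move=> j p i ik [jk _]; exact: reads_tailStar.
- by move=> j g IHg p i ik [jk _ /IHg [r [Hr Dr]]]; exact: reads_tailStarE Hr Dr.
- move=> b l IHl x [l_ne _ lk _ Wl].
  have [r [Hr Dr Hsingle]] := IHl _ Wl lk ltac:(by case: (l) l_ne).
  case: b {Wl}.
  + have [r' [Hr' Er']] := readU_union (rU1 (rC1 (rS1 (rAeps k)))) Hr.
    exists r'; split; first exact: (readC_paren Hr').
    move=> w; rewrite Er' rmem_union rmem_eps Dr; split; last by case=> [[_]|]; [left|right].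
    by case; [left|right].
  + exists r; split; first by case: (single_alt l) Hsingle => [/(_ isT)|_] //; exact: readC_paren.
    by move=> w; rewrite Dr; split; [right|case=> // -[]].
- move=> i t IHt l IHl p [Wt Wl] /andP [ik lk] _.
  have [r [Hr Dr]] := IHt _ _ ik Wt.
  case El: l => [|j t' l'].
  + exists r; rewrite cats0; split=> //; first exact: rU1.
    by move=> w; rewrite Dr; split=> [|[]//]; left.
  + rewrite -El; have [r2 [Hr2 Dr2 _]] := IHl _ Wl lk ltac:(by rewrite El).
    have [r' [Hr' Er']] := readU_union (rU1 Hr) Hr2.
    exists r'; split; last by rewrite El.
    * exact: Hr'.
    * by move=> w; rewrite Er' rmem_union Dr Dr2.
Qed.

(** * The language determines the syntax *)

Fixpoint alt_in c t l :=
  if l is AltCons i t' l' then (i = c /\ t' = t) \/ alt_in c t l' else False.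

Fixpoint tail_size t :=
  match t with
  | Tail0 | TailStar _ => 1
  | TailE g | TailStarE _ g => (group_size g).+1
  end
with group_size g := let: Group _ l := g in (alts_size l).+1
with alts_size l := if l is AltCons _ t l' then tail_size t + alts_size l' + 1 else 1.

Lemma alts_lang_nil l : ~ alts_lang l [::].
Proof. by elim: l => //= i t l IH [[w' []]|]. Qed.

Lemma alts_lang_cons l c w : alts_lang l (c :: w) <-> exists t, alt_in c t l /\ tail_lang t w.
Proof.
elim: l => [|i t l IH] /=; first by split=> // -[t []].
rewrite IH; split.
- case=> [[w' [[-> <-] H]]|[t' [H1 H2]]]; first by exists t; split=> //; left.
  by exists t'; split=> //; right.
- by case=> t' [[[-> ->]|H1] H2]; [left; exists w|right; exists t'].
Qed.

Lemma alt_in_heads c t l : alt_in c t l -> c \in heads l.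
Proof. by elim: l => //= i t' l IH [[-> _]|/IH H]; rewrite inE ?eqxx // H orbT. Qed.

Lemma alt_in_wf k p c t l : wf_alts k p l -> alt_in c t l -> wf_tail k p c t.
Proof. by elim: l => //= i t' l IH [Wt Wl] [[<- <-]|/IH]; auto. Qed.

Lemma alt_in_size c t l : alt_in c t l -> tail_size t < alts_size l.
Proof. by elim: l => //= i t' l IH [[_ ->]|/IH]; lia. Qed.

Lemma alt_in_uniq c t1 t2 l : uniq (heads l) -> alt_in c t1 l -> alt_in c t2 l -> t1 = t2.
Proof.
elim: l => //= i t l IH /andP [i_notin U].
case=> [[<- <-]|H1] [[E2 <-]|H2] //; last exact: IH.
- by move: i_notin; rewrite (alt_in_heads H2).
- by move: i_notin; rewrite E2 (alt_in_heads H1).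
Qed.

Lemma group_lang_nil b l : group_lang (Group b l) [::] <-> b.
Proof. by split=> [[[]|/alts_lang_nil]|->] //; left. Qed.

Lemma group_lang_cons b l c w :
  group_lang (Group b l) (c :: w) <-> exists t, alt_in c t l /\ tail_lang t w.
Proof. by rewrite /= -alts_lang_cons; split=> [[[]|]|] //; right. Qed.

Lemma group_lang_excluded k j g w : wf_group k (Some j) g -> ~ group_lang g (j :: w).
Proof.
case: g => b l [_ _ _ excl _] /group_lang_cons [t [/alt_in_heads jl _]].
by move: (excl j erefl); rewrite jl.
Qed.

Lemma langs_inhabited k :
  (forall t p i, wf_tail k p i t -> exists w, tail_lang t w) /\
  (forall g x, wf_group k x g -> exists c w, group_lang g (c :: w) /\ c \in group_heads g) /\
  (forall l p, wf_alts k p l -> l <> Alt0 -> exists c w, alts_lang l (c :: w) /\ c \in heads l).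
Proof.
apply: syntax_mind => //=.
- by move=> *; exists [::].
- by move=> g IH p i /IH [c [w [H _]]]; exists (c :: w).
- by move=> j p i _; exists [::], 0.
- by move=> j g IH p i [_ _ /IH [c [w [H _]]]]; exists (c :: w), 0, (c :: w).
- move=> b l IH x [l_ne _ _ _ Wl].
  have [c [w [H1 H2]]] := IH _ Wl ltac:(by case: (l) l_ne).
  by exists c, w; split=> //; right.
- move=> i t IHt l IHl p [Wt _] _; have [w Hw] := IHt _ _ Wt.
  by exists i, w; split; [left; exists w|rewrite inE eqxx].
Qed.

Lemma wf_group_inhabited k x g :
  wf_group k x g -> exists c w, group_lang g (c :: w) /\ forall j, x = Some j -> c <> j.
Proof.
move=> Wg; have [c [w [H cg]]] := (langs_inhabited k).2.1 _ _ Wg.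
exists c, w; split=> // j Ex Ec; case: g Wg H cg => b l [_ _ _ excl _] _ /= cl.
by move: (excl j Ex); rewrite -Ec cl.
Qed.

Lemma sorted_head_lt (i c : nat) s : sorted ltn (i :: s) -> c \in s -> i < c.
Proof. by move=> /= /(order_path_min ltn_trans) /allP; apply. Qed.

Lemma alts_lang_head_sorted i t l w :
  sorted ltn (heads (AltCons i t l)) -> ~ alts_lang l (i :: w).
Proof.
move=> S /alts_lang_cons [t0 [/alt_in_heads il _]].
by have := sorted_head_lt S il; rewrite ltnn.
Qed.

Lemma nseq_eq_cons n (j c : nat) w : nseq n j = c :: w -> c = j /\ w = nseq n.-1 j.
Proof. by case: n => //= n [-> ->]. Qed.

Lemma tailStarE_lang_cons k j g w : wf_group k (Some j) g ->
  tail_lang (TailStarE j g) (j :: w) <-> tail_lang (TailStarE j g) w.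
Proof.
move=> Wg /=; split; last by case=> n [w' [-> H]]; exists n.+1, w'.
case=> [[|n]] [w' [/= E H]]; first by subst w'; case: (group_lang_excluded Wg H).
by case: E => E; exists n, w'.
Qed.

Lemma tailStarE_lang_other j' g' j w : j <> j' ->
  tail_lang (TailStarE j' g') (j :: w) <-> group_lang g' (j :: w).
Proof.
move=> ne /=; split; last by move=> H; exists 0, (j :: w).
by case=> [[|n]] [w' [/= E H]]; [rewrite E|case: E => /ne].
Qed.

Section LangInjective.
Variable k : nat.

Definition wf_tail_some t := exists p i, wf_tail k p i t.

Lemma tail0_neq_tailE x g : wf_group k x g -> ~ eqlang (tail_lang Tail0) (tail_lang (TailE g)).
Proof. by move=> /(langs_inhabited k).2.1 [c [w [H _]]] E; move/E: H. Qed.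

Lemma tail0_neq_tailStar j : ~ eqlang (tail_lang Tail0) (tail_lang (TailStar j)).
Proof. by move=> E; have /E : tail_lang (TailStar j) [:: j] by exists 1. Qed.

Lemma tail0_neq_tailStarE j g : wf_group k (Some j) g ->
  ~ eqlang (tail_lang Tail0) (tail_lang (TailStarE j g)).
Proof.
move=> /(langs_inhabited k).2.1 [c [w [H _]]] E.
by have /E : tail_lang (TailStarE j g) (j :: c :: w) by exists 1, (c :: w).
Qed.

Lemma tailStar_neq_tailStarE j j' g' : wf_group k (Some j') g' ->
  ~ eqlang (tail_lang (TailStar j)) (tail_lang (TailStarE j' g')).
Proof.
move=> /wf_group_inhabited [c [w [H /(_ j' erefl) cj']]] E.
have /E [n /esym /nseq_eq_cons [Ec _]] : tail_lang (TailStarE j' g') (c :: w).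
  by exists 0, (c :: w).
subst c.
have /E [m /esym /nseq_eq_cons [Ej _]] : tail_lang (TailStarE j' g') (j' :: j :: w).
  by exists 1, (j :: w).
by apply: cj'.
Qed.

Lemma tailStarE_group_eqlang j g g' : wf_group k (Some j) g -> wf_group k (Some j) g' ->
  eqlang (tail_lang (TailStarE j g)) (tail_lang (TailStarE j g')) ->
  eqlang (group_lang g) (group_lang g').
Proof.
suff sub h h' : wf_group k (Some j) h ->
    eqlang (tail_lang (TailStarE j h)) (tail_lang (TailStarE j h')) ->
    forall w, group_lang h w -> group_lang h' w.
  by move=> Wg Wg' E w; split; apply: sub => //; exact: eqlang_sym.
move=> Wh E w H; have /E [[|m] [w' [/= Ew H']]] : tail_lang (TailStarE j h) w.
  by exists 0, w.
- by rewrite Ew.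
- by case: (group_lang_excluded (w := nseq m j ++ w') Wh); rewrite -Ew.
Qed.

Variable n : nat.
Hypothesis IH : forall t1 t2, tail_size t1 + tail_size t2 < n ->
  wf_tail_some t1 -> wf_tail_some t2 -> eqlang (tail_lang t1) (tail_lang t2) -> t1 = t2.

Lemma alts_lang_inj l1 l2 p1 p2 : alts_size l1 + alts_size l2 <= n ->
  sorted ltn (heads l1) -> sorted ltn (heads l2) -> wf_alts k p1 l1 -> wf_alts k p2 l2 ->
  eqlang (alts_lang l1) (alts_lang l2) -> l1 = l2.
Proof.
have [Ht [_ Hl]] := langs_inhabited k.
elim: l1 l2 => [|i t l IHl] [|i' t' l'] sz S1 S2 W1 W2 E //.
- by have [c [w [/E H _]]] := Hl _ _ W2 ltac:(done).
- by have [c [w [/E H _]]] := Hl _ _ W1 ltac:(done).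
have [w Hw] := Ht _ _ _ W1.1; have [w' Hw'] := Ht _ _ _ W2.1.
have Ei : i = i'.
  have /E /alts_lang_cons [u1 [/alt_in_heads /= H1 _]] : alts_lang (AltCons i t l) (i :: w).
    by left; exists w.
  have /E /alts_lang_cons [u2 [/alt_in_heads /= H2 _]] : alts_lang (AltCons i' t' l') (i' :: w').
    by left; exists w'.
  move: H1 H2; rewrite !inE => /orP [/eqP //|H1] /orP [/eqP //|H2].
  by have := sorted_head_lt S1 H2; have := sorted_head_lt S2 H1; lia.
subst i'; have Et : t = t'.
  apply: IH; first by move: sz => /=; lia.
  - by exists p1, i; case: W1.
  - by exists p2, i; case: W2.
  move=> u; split=> H.
  + have /E [[u0 [[<-] //]]|/(alts_lang_head_sorted S2) //] : alts_lang (AltCons i t l) (i :: u).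
      by left; exists u.
  + have /E [[u0 [[<-] //]]|/(alts_lang_head_sorted S1) //] : alts_lang (AltCons i t' l') (i :: u).
      by left; exists u.
subst t'; congr AltCons; apply: (IHl _ _ (path_sorted S1) (path_sorted S2) W1.2 W2.2).
  by move: sz => /=; lia.
move=> [|c u]; first by split=> /alts_lang_nil.
case: (eqVneq c i) => [->|ne].
  by split=> [/(alts_lang_head_sorted S1)|/(alts_lang_head_sorted S2)].
have other l0 t0 : alts_lang (AltCons i t0 l0) (c :: u) -> alts_lang l0 (c :: u).
  by case=> // -[u0 [[Ec] _]]; move: ne; rewrite Ec eqxx.
by split=> H; apply: other; apply/E; right.
Qed.

Lemma group_lang_inj g1 g2 x1 x2 : group_size g1 + group_size g2 <= n.+2 ->
  wf_group k x1 g1 -> wf_group k x2 g2 -> eqlang (group_lang g1) (group_lang g2) -> g1 = g2.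
Proof.
case: g1 g2 => b1 l1 [b2 l2] sz [_ S1 _ _ W1] [_ S2 _ _ W2] E.
have Eb : b1 = b2.
  by apply/idP/idP => /group_lang_nil H; apply/group_lang_nil; apply/E.
subst b2; congr Group; apply: (alts_lang_inj _ S1 S2 W1 W2); first by move: sz => /=; lia.
move=> [|c w]; first by split=> /alts_lang_nil.
have E' := E (c :: w); rewrite /= in E'.
by split=> H; [case: E'.1|case: E'.2] => //; [right|case|right|case].
Qed.

Lemma tailE_neq_tailStar x g j : tail_size (TailE g) + tail_size (TailStar j) <= n ->
  wf_group k x g -> ~ eqlang (tail_lang (TailE g)) (tail_lang (TailStar j)).
Proof.
case: g => b l sz [_ S lk _ W] E.
have b_true : b by apply/(group_lang_nil b l)/E; exists 0.
have /E /group_lang_cons [t [jt Ht]] : tail_lang (TailStar j) [:: j] by exists 1.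
have Wt := alt_in_wf W jt; rewrite b_true /= in Wt.
have Et : t = TailStar j.
  apply: IH => //; first by have := alt_in_size jt; move: sz => /=; lia.
  - by exists true, j.
  - by exists false, j; split=> //; apply: (allP lk); exact: alt_in_heads jt.
  move=> w; split=> H.
  + have /E [m /esym /nseq_eq_cons [_ ->]] : group_lang (Group b l) (j :: w).
      by apply/group_lang_cons; exists t.
    by exists m.-1.
  + have /group_lang_cons [t0 [jt0 H0]] : group_lang (Group b l) (j :: w).
      by apply/E; case: H => m ->; exists m.+1.
    by rewrite (alt_in_uniq (sorted_uniq ltn_trans ltnn S) jt jt0).
by subst t; case: Wt => _ /(_ erefl).
Qed.

Lemma tailE_neq_tailStarE x g j g' : tail_size (TailE g) + tail_size (TailStarE j g') <= n ->
  wf_group k x g -> wf_group k (Some j) g' ->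
  ~ eqlang (tail_lang (TailE g)) (tail_lang (TailStarE j g')).
Proof.
case: g => b l sz [l_ne S lk _ W] Wg' E.
have [c [w0 [Hw0 /(_ j erefl) cj]]] := wf_group_inhabited Wg'.
have /E /group_lang_cons [t [jt Ht]] : tail_lang (TailStarE j g') (j :: c :: w0).
  by exists 1, (c :: w0).
have Wt := alt_in_wf W jt.
have Et : t = TailStarE j g'.
  apply: IH => //; first by have := alt_in_size jt; move: sz => /=; lia.
  - by exists (b || (1 < size (heads l))), j.
  - by exists false, j; split=> //; apply: (allP lk); exact: alt_in_heads jt.
  move=> w; rewrite -(tailStarE_lang_cons w Wg'); split=> H.
  + by apply/E/group_lang_cons; exists t.
  + move/E/group_lang_cons: H => [t0 [jt0 H0]].
    by rewrite (alt_in_uniq (sorted_uniq ltn_trans ltnn S) jt jt0).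
subst t; case: Wt => _ /= p_ne _.
have /norP [/negbTE b_false single] : ~~ (b || (1 < size (heads l))).
  by apply/negP => /p_ne.
subst b; case: l l_ne S W jt single E {sz p_ne lk} => // i0 t0 [] // _ _ _ /= [[Ei _]|//] _ E.
have /E : tail_lang (TailStarE j g') (c :: w0) by exists 0, (c :: w0).
by case=> [[]|[[w' [[Ec _] _]]|]] //; apply: cj; rewrite Ec Ei.
Qed.

Lemma tailStarE_size_lt j g j' g' :
  tail_size (TailStarE j g) + tail_size (TailStarE j' g') <= n -> j <> j' ->
  wf_group k (Some j) g -> wf_group k (Some j') g' ->
  eqlang (tail_lang (TailStarE j g)) (tail_lang (TailStarE j' g')) ->
  group_size g < group_size g'.
Proof.
move=> sz ne Wg Wg' E; have [c [w0 [Hw0 _]]] := wf_group_inhabited Wg.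
case: g' Wg' E sz => b' l' Wg' E sz.
have /E /(tailStarE_lang_other _ _ ne) /group_lang_cons [t' [jt' Ht']] :
    tail_lang (TailStarE j g) (j :: c :: w0) by exists 1, (c :: w0).
case: (Wg') => _ S lk _ W; have Wt := alt_in_wf W jt'.
have Et : t' = TailStarE j g.
  apply: IH => //; first by have := alt_in_size jt'; move: sz => /=; lia.
  - by exists (b' || (1 < size (heads l'))), j.
  - by exists false, j; split=> //; apply: (allP lk); exact: alt_in_heads jt'.
  move=> w; rewrite -(tailStarE_lang_cons w Wg); split=> H.
  + by apply/E/(tailStarE_lang_other _ _ ne)/group_lang_cons; exists t'.
  + move/E/(tailStarE_lang_other _ _ ne)/group_lang_cons: H => [t0 [jt0 H0]].
    by rewrite (alt_in_uniq (sorted_uniq ltn_trans ltnn S) jt' jt0).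
by subst t'; have := alt_in_size jt' => /=; lia.
Qed.

Lemma tail_lang_inj_step t1 t2 : tail_size t1 + tail_size t2 <= n ->
  wf_tail_some t1 -> wf_tail_some t2 -> eqlang (tail_lang t1) (tail_lang t2) -> t1 = t2.
Proof.
have WE g : wf_tail_some (TailE g) -> wf_group k None g by case=> p [i].
have WS j g : wf_tail_some (TailStarE j g) -> wf_group k (Some j) g by case=> p [i []].
move=> sz W1 W2 E; have E' := eqlang_sym E.
have sz' : tail_size t2 + tail_size t1 <= n by rewrite addnC.
case: t1 W1 E E' sz sz' => [|g|j|j g] W1 E E' sz sz'.
all: case: t2 W2 E E' sz sz' => [|g'|j'|j' g'] W2 E E' sz sz'.
all: try by [ done | case: (tail0_neq_tailE (WE _ W2) E) | case: (tail0_neq_tailE (WE _ W1) E')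
            | case: (tail0_neq_tailStar E) | case: (tail0_neq_tailStar E')
            | case: (tail0_neq_tailStarE (WS _ _ W2) E) | case: (tail0_neq_tailStarE (WS _ _ W1) E')
            | case: (tailStar_neq_tailStarE (WS _ _ W2) E)
            | case: (tailStar_neq_tailStarE (WS _ _ W1) E')
            | case: (tailE_neq_tailStar sz (WE _ W1) E)
            | case: (tailE_neq_tailStar sz' (WE _ W2) E')
            | case: (tailE_neq_tailStarE sz (WE _ W1) (WS _ _ W2) E)
            | case: (tailE_neq_tailStarE sz' (WE _ W2) (WS _ _ W1) E') ].
- by congr TailE; apply: (group_lang_inj _ (WE _ W1) (WE _ W2) E); move: sz => /=; lia.
- by have /E [m /esym /nseq_eq_cons [-> _]] : tail_lang (TailStar j) [:: j] by exists 1.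
- case: (eqVneq j j') => [Ej|/eqP ne]; last first.
    have := tailStarE_size_lt sz ne (WS _ _ W1) (WS _ _ W2) E.
    have := tailStarE_size_lt sz' (nesym ne) (WS _ _ W2) (WS _ _ W1) E'.
    by lia.
  subst j'; congr TailStarE; apply: (group_lang_inj _ (WS _ _ W1) (WS _ _ W2)).
    by move: sz => /=; lia.
  exact: tailStarE_group_eqlang (WS _ _ W1) (WS _ _ W2) E.
Qed.

End LangInjective.

Lemma tail_lang_inj k t1 t2 : wf_tail_some k t1 -> wf_tail_some k t2 ->
  eqlang (tail_lang t1) (tail_lang t2) -> t1 = t2.
Proof.
suff H n : forall t1 t2, tail_size t1 + tail_size t2 < n -> wf_tail_some k t1 ->
    wf_tail_some k t2 -> eqlang (tail_lang t1) (tail_lang t2) -> t1 = t2.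
  exact: H (ltnSn _).
by elim: n => [|n IHn] // u1 u2 sz; apply: (tail_lang_inj_step IHn).
Qed.

Lemma group_lang_injective k x1 x2 g1 g2 : wf_group k x1 g1 -> wf_group k x2 g2 ->
  eqlang (group_lang g1) (group_lang g2) -> g1 = g2.
Proof.
apply: (group_lang_inj (n := group_size g1 + group_size g2)) => //.
- by move=> t1 t2 _; exact: tail_lang_inj.
- exact: leqW (leqW _).
Qed.

(** * Parse trees of G are trees of syntax *)

Definition ntP (p : bool) i := if p then NP' i else NP i.
Definition ntE x := if x is Some j then NEi j else NE.
Definition ntZ x := if x is Some j then NZi j else NZ.
Definition ntY (p : bool) x :=
  match x with None => if p then NY' else NY | Some j => if p then NYi' j else NYi j end.

Fixpoint tail_tree p i t : ptree :=
  Node (ntP p i) (Leaf (TA i) ::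
    match t with
    | Tail0 => [::]
    | TailE g => [:: group_tree None g]
    | TailStar j => [:: Leaf (TA j); Leaf TStar]
    | TailStarE j g => [:: Leaf (TA j); Leaf TStar; group_tree (Some j) g]
    end)
with group_tree x g :=
  let: Group b l := g in
  let body :=
    if single_alt l then Node (ntY b x) (alts_trees b l) else Node (ntZ x) (alts_trees true l) in
  Node (ntE x)
    (if b then [:: Leaf TL; Leaf TEps; Leaf TPlus; body; Leaf TR]
     else if single_alt l then [:: body] else [:: Leaf TL; body; Leaf TR])
with alts_trees p l :=
  if l is AltCons i t l' then
    tail_tree p i t :: (if l' is Alt0 then [::] else Leaf TPlus :: alts_trees p l')
  else [::].

Definition group_body b x l :=
  if single_alt l then Node (ntY b x) (alts_trees b l) else Node (ntZ x) (alts_trees true l).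

Lemma group_treeE x b l : group_tree x (Group b l) =
  Node (ntE x) (if b then [:: Leaf TL; Leaf TEps; Leaf TPlus; group_body b x l; Leaf TR]
                else if single_alt l then [:: group_body b x l]
                else [:: Leaf TL; group_body b x l; Leaf TR]).
Proof. by []. Qed.

Definition start_tree l := Node NS [:: group_body false None l].

Lemma yield_node A ts : yield (Node A ts) = flatten (map yield ts).
Proof. by elim: ts => //= t ts; rewrite /flatten /= => ->. Qed.

Lemma yield_trees :
  (forall t p i, yield (tail_tree p i t) = TA i :: print_tail t) /\
  (forall g x, yield (group_tree x g) = print_group g) /\
  (forall l p, flatten (map yield (alts_trees p l)) = print_alts l).
Proof.
apply: syntax_mind => //.
- by move=> g IH p i; rewrite yield_node /= IH cats0.
- by move=> j g IH p i; rewrite yield_node /= IH cats0.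
- move=> b l IH x; cbn [group_tree print_group]; rewrite yield_node.
  by case: b; case: (single_alt l); cbn [map flatten foldr cat]; rewrite yield_node IH ?cats0.
- move=> i t IHt l IHl p /=; rewrite IHt; case: l IHl => [|j t' l'] IHl //.
  have flatten_cons (u : seq tok) us : flatten (u :: us) = u ++ flatten us by [].
  by rewrite map_cons flatten_cons IHl.
Qed.

Lemma yield_start_tree l : yield (start_tree l) = print_alts l.
Proof.
rewrite /start_tree /group_body yield_node.
by case: (single_alt l); cbn [map flatten foldr]; rewrite yield_node yield_trees.2.2 cats0.
Qed.

Fixpoint tree_size t := if t is Node _ ts then (sumn (map tree_size ts)).+1 else 1.

Fixpoint tree_in (t : ptree) ts := if ts is t' :: ts' then t = t' \/ tree_in t ts' else False.

Lemma tree_in_size t A ts : tree_in t ts -> tree_size t < tree_size (Node A ts).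
Proof. by elim: ts => //= t' ts IH [->|/IH /=]; lia. Qed.

Lemma valid_node k A ts :
  valid k (Node A ts) <-> prod k A (map root ts) /\ forall t, tree_in t ts -> valid k t.
Proof.
rewrite /=; apply: and_iff_compat_l; elim: ts => [|t ts [IH1 IH2]] /=; first by [].
split=> [[Vt /IH1 Vts] t' [->|/Vts]|V] //.
by split; [apply: V; left|apply: IH2 => t' I; apply: V; right].
Qed.

Lemma root_leaf t a : root t = T a -> t = Leaf a.
Proof. by case: t => //= b [->]. Qed.

Lemma root_node t A : root t = N A -> exists ts, t = Node A ts.
Proof. by case: t => //= B ts [->]; exists ts. Qed.

Lemma extract_alts k p ns ts :
  (forall t i, tree_in t ts -> root t = N (ntP p i) ->
     exists u, wf_tail k p i u /\ t = tail_tree p i u) ->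
  map root ts = sep_plus (map (fun i => N (ntP p i)) ns) -> ns <> [::] ->
  exists l, [/\ heads l = ns, wf_alts k p l & ts = alts_trees p l].
Proof.
elim: ns ts => [|i ns IH] ts Ht Ets // _.
case: ts Ht Ets => [|t ts] Ht Ets; first by case: ns {IH} Ets.
have [u [Wu ->]] : exists u, wf_tail k p i u /\ t = tail_tree p i u.
  by apply: Ht; [left|case: ns {IH} Ets => [|? ?] [->]].
case: ns IH Ets => [|i' ns] IH Ets.
  by case: ts {Ht} Ets => // _; exists (AltCons i u Alt0).
case: ts Ht Ets => // t' ts Ht [_ /root_leaf -> Ets].
have Hts t0 i0 I := Ht t0 i0 (or_intror (or_intror I)).
have [l [Hl Wl ->]] := IH ts Hts Ets ltac:(by []).
by exists (AltCons i u l); split=> //=; [rewrite Hl|case: l Hl Wl].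
Qed.

Lemma prod_ntP k p i rhs : prod k (ntP p i) rhs -> i < k /\
  [\/ rhs = [:: T (TA i)], rhs = [:: T (TA i); N (ntE None)],
      exists2 j, j < k /\ (p -> j <> i) & rhs = [:: T (TA i); T (TA j); T TStar] |
      exists2 j, j < k /\ (p -> j <> i) & rhs = [:: T (TA i); T (TA j); T TStar; N (ntE (Some j))]].
Proof.
case: p => H; inversion H; subst; split=> //.
{ match goal with ne : is_true (_ != ?j) |- _ =>
    have {}ne : j <> i by move=> E; rewrite E eqxx in ne
  end.
  match goal with alt : _ \/ _ |- _ => case: alt => [->|[->|[->|->]]] end.
  all: by [constructor 1|constructor 2|constructor 3; exists j|constructor 4; exists j]. }
match goal with P : prodP _ _ _ |- _ => case: P => [||j jk|j jk] end.
all: by [constructor 1|constructor 2|constructor 3; exists j|constructor 4; exists j].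
Qed.

Lemma prod_ntE k x rhs : prod k (ntE x) rhs ->
  [\/ rhs = [:: N (ntY false x)], rhs = [:: T TL; N (ntZ x); T TR],
      rhs = [:: T TL; T TEps; T TPlus; N (ntY true x); T TR] |
      rhs = [:: T TL; T TEps; T TPlus; N (ntZ x); T TR]].
Proof.
case: x => [j|] H; inversion H; subst.
all: by [constructor 1|constructor 2|constructor 3|constructor 4].
Qed.

Lemma prod_ntY k p x rhs : prod k (ntY p x) rhs ->
  exists i, [/\ i < k, forall j, x = Some j -> i <> j & rhs = [:: N (ntP p i)]].
Proof.
case: p; case: x => [j|] H; inversion H; subst; [exists j0|exists i|exists j0|exists i].
all: split=> // j' [<-] E; subst.
all: match goal with ne : is_true (?a != ?a) |- _ => by rewrite eqxx in ne end.
Qed.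

Lemma prod_ntZ k x rhs : prod k (ntZ x) rhs ->
  exists ns, [/\ 1 < size ns, sorted ltn ns, all (gtn k) ns,
                 forall j, x = Some j -> j \notin ns &
                 rhs = sep_plus (map (fun i => N (ntP true i)) ns)].
Proof. by case: x => [j|] H; inversion H; subst; exists ns; split=> // j' [<-]. Qed.

Lemma prod_NS k rhs : prod k NS rhs -> rhs = [:: N (ntY false None)] \/ rhs = [:: N (ntZ None)].
Proof. by move=> H; inversion H; [left|right]. Qed.

Lemma single_altE l : single_alt l = (size (heads l) == 1).
Proof. by case: l => [|i t []]. Qed.

Definition tree_shape k t :=
  [/\ forall p i, root t = N (ntP p i) ->
        exists u, [/\ i < k, wf_tail k p i u & t = tail_tree p i u],
      forall x, root t = N (ntE x) -> exists g, wf_group k x g /\ t = group_tree x g &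
      root t = N NS -> exists l, wf_group k None (Group false l) /\ t = start_tree l].

Section Extract.
Variables (k n : nat).
Hypothesis IH : forall t, tree_size t < n -> valid k t -> tree_shape k t.

Lemma child_shape A ts t : tree_size (Node A ts) <= n -> valid k (Node A ts) ->
  tree_in t ts -> [/\ tree_size t < n, valid k t & tree_shape k t].
Proof.
move=> sz /valid_node [_ V] I; have lt := leq_trans (tree_in_size A I) sz.
by split=> //; [exact: V|exact: IH (V _ I)].
Qed.

Lemma tail_children p A ts : tree_size (Node A ts) <= n -> valid k (Node A ts) ->
  forall t i, tree_in t ts -> root t = N (ntP p i) ->
  exists u, wf_tail k p i u /\ t = tail_tree p i u.
Proof.
move=> sz V t i I Et; have [_ _ [St _ _]] := child_shape sz V I.
by have [u [_ Wu ->]] := St p i Et; exists u.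
Qed.

Lemma extract_Y b x ts : tree_size (Node (ntY b x) ts) <= n -> valid k (Node (ntY b x) ts) ->
  exists l, [/\ wf_group k x (Group b l), single_alt l & Node (ntY b x) ts = group_body b x l].
Proof.
move=> sz V; have [P _] := (valid_node k _ ts).1 V.
have [i [ik xi Ets]] := prod_ntY P.
have [l [Hl Wl ->]] := extract_alts (tail_children sz V) (ns := [:: i]) Ets ltac:(by []).
have single : single_alt l by rewrite single_altE Hl.
exists l; rewrite /group_body single; split=> //; split; rewrite /= ?Hl /= ?orbF ?andbT //.
by move=> j /xi ij; rewrite inE; apply/eqP => /esym.
Qed.

Lemma extract_Z b x ts : tree_size (Node (ntZ x) ts) <= n -> valid k (Node (ntZ x) ts) ->
  exists l, [/\ wf_group k x (Group b l), ~~ single_alt l & Node (ntZ x) ts = group_body b x l].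
Proof.
move=> sz V; have [P _] := (valid_node k _ ts).1 V.
have [ns [ns_gt1 S nsk xns Ets]] := prod_ntZ P.
have [l [Hl Wl ->]] := extract_alts (tail_children sz V) Ets ltac:(by case: (ns) ns_gt1).
have multi : ~~ single_alt l by rewrite single_altE Hl gtn_eqF.
exists l; rewrite /group_body (negbTE multi); split=> //.
by split; rewrite Hl ?ns_gt1 ?orbT // ltnW.
Qed.

Lemma extract_tail p i ts : tree_size (Node (ntP p i) ts) <= n -> valid k (Node (ntP p i) ts) ->
  exists u, [/\ i < k, wf_tail k p i u & Node (ntP p i) ts = tail_tree p i u].
Proof.
move=> sz V; have [P _] := (valid_node k _ ts).1 V.
have group_child x t : tree_in t ts -> root t = N (ntE x) ->
    exists g, wf_group k x g /\ t = group_tree x g.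
  by move=> I; have [_ _ [_ Sg _]] := child_shape sz V I; apply: Sg.
have [ik] := prod_ntP P; case=> [Ets|Ets|[j [jk pj] Ets]|[j [jk pj] Ets]].
- case: ts Ets {P V sz group_child} => [|t1 []] //= [/root_leaf ->].
  by exists Tail0.
- case: ts Ets group_child {P V sz} => [|t1 [|t2 []]] //= [/root_leaf -> E2] Hg.
  by have [g [Wg ->]] := Hg None t2 (or_intror (or_introl erefl)) E2; exists (TailE g).
- case: ts Ets {P V sz group_child} => [|t1 [|t2 [|t3 []]]] //=.
  by case=> /root_leaf -> /root_leaf -> /root_leaf ->; exists (TailStar j).
- case: ts Ets group_child {P V sz} => [|t1 [|t2 [|t3 [|t4 []]]]] //=.
  case=> /root_leaf -> /root_leaf -> /root_leaf -> E4 Hg.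
  have [g [Wg ->]] := Hg (Some j) t4 ltac:(by right; right; right; left) E4.
  by exists (TailStarE j g).
Qed.

Lemma extract_group x ts : tree_size (Node (ntE x) ts) <= n -> valid k (Node (ntE x) ts) ->
  exists g, wf_group k x g /\ Node (ntE x) ts = group_tree x g.
Proof.
move=> sz V; have [P _] := (valid_node k _ ts).1 V.
have child t : tree_in t ts -> tree_size t <= n /\ valid k t.
  by move=> I; have [lt Vt _] := child_shape sz V I; split=> //; exact: ltnW.
case: (prod_ntE P) => Ets.
- case: ts Ets child {P V sz} => [|t1 []] //= [/root_node [us ->]].
  move=> /(_ _ (or_introl erefl)) [sz1 V1]; have [l [Wl single ->]] := extract_Y sz1 V1.
  by exists (Group false l); rewrite group_treeE single.
- case: ts Ets child {P V sz} => [|t1 [|t2 [|t3 []]]] //=.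
  case=> /root_leaf -> /root_node [us ->] /root_leaf ->.
  move=> /(_ _ (or_intror (or_introl erefl))) [sz2 V2].
  have [l [Wl multi ->]] := extract_Z false sz2 V2.
  by exists (Group false l); rewrite group_treeE (negbTE multi).
- case: ts Ets child {P V sz} => [|t1 [|t2 [|t3 [|t4 [|t5 []]]]]] //=.
  case=> /root_leaf -> /root_leaf -> /root_leaf -> /root_node [us ->] /root_leaf ->.
  move=> /(_ _ ltac:(by right; right; right; left)) [sz4 V4].
  have [l [Wl _ ->]] := extract_Y sz4 V4.
  by exists (Group true l).
- case: ts Ets child {P V sz} => [|t1 [|t2 [|t3 [|t4 [|t5 []]]]]] //=.
  case=> /root_leaf -> /root_leaf -> /root_leaf -> /root_node [us ->] /root_leaf ->.
  move=> /(_ _ ltac:(by right; right; right; left)) [sz4 V4].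
  have [l [Wl _ ->]] := extract_Z true sz4 V4.
  by exists (Group true l).
Qed.

Lemma extract_start ts : tree_size (Node NS ts) <= n -> valid k (Node NS ts) ->
  exists l, wf_group k None (Group false l) /\ Node NS ts = start_tree l.
Proof.
move=> sz V; have [P _] := (valid_node k _ ts).1 V.
case: ts P sz V => [|t1 [|t2 ts]] P sz V; try by case: (prod_NS P).
have [/ltnW sz1 V1 _] := child_shape sz V (or_introl erefl).
case: (prod_NS P) => -[/root_node [us E1]]; subst t1.
- by have [l [Wl _ ->]] := extract_Y (b := false) (x := None) sz1 V1; exists l.
- by have [l [Wl _ ->]] := extract_Z false (x := None) sz1 V1; exists l.
Qed.

Lemma tree_shape_step t : tree_size t <= n -> valid k t -> tree_shape k t.
Proof.
case: t => [a|A ts] sz V; first by split.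
split.
- by move=> p i [EA]; subst A; exact: extract_tail.
- by move=> x [EA]; subst A; exact: extract_group.
- by move=> [EA]; subst A; exact: extract_start.
Qed.

End Extract.

Lemma tree_shapeP k t : valid k t -> tree_shape k t.
Proof.
elim: {t}(tree_size t).+1 {-2}t (ltnSn (tree_size t)) => [//|n IHn] t sz.
exact: (tree_shape_step (n := n) (fun u su => IHn u su)).
Qed.

Lemma parse_tree_start k t s : parse_tree k t s ->
  exists l, [/\ wf_group k None (Group false l), t = start_tree l & s = print_alts l].
Proof.
move=> [V [Rt <-]]; have [_ _ /(_ Rt) [l [Wl ->]]] := tree_shapeP V.
by exists l; rewrite yield_start_tree.
Qed.

Lemma start_reads k l : wf_group k None (Group false l) ->
  exists r, reads k (print_alts l) r /\ eqlang (rmem r) (alts_lang l).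
Proof.
case=> l_ne _ lk _ Wl; have [_ [_ Hl]] := print_reads k.
by have [r [R D _]] := Hl _ _ Wl lk ltac:(by case: (l) l_ne); exists r.
Qed.

Lemma start_alts_inj k l1 l2 : wf_group k None (Group false l1) ->
  wf_group k None (Group false l2) -> eqlang (alts_lang l1) (alts_lang l2) -> l1 = l2.
Proof.
move=> W1 W2 E; suff [] : Group false l1 = Group false l2 by [].
by apply: group_lang_injective W1 W2 _ => w /=; rewrite E.
Qed.

Lemma parse_tree_lang k t s : parse_tree k t s ->
  exists l r, [/\ wf_group k None (Group false l), t = start_tree l, s = print_alts l,
                  reads k s r & eqlang (rmem r) (alts_lang l)].
Proof.
move=> /parse_tree_start [l [Wl -> ->]]; have [r [R D]] := start_reads Wl.
by exists l, r.
Qed.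

Theorem mainTheorem3 (k : nat) (hk : 1 <= k) :
  unambiguous k /\
  (forall s, generated k s -> exists r, reads k s r) /\
  (forall s1 s2 r1 r2, generated k s1 -> generated k s2 -> s1 <> s2 ->
     reads k s1 r1 -> reads k s2 r2 ->
     ~ (forall w, rmem r1 w <-> rmem r2 w)).
Proof.
split; [|split].
- move=> s _ t1 t2 /parse_tree_lang [l1 [r1 [W1 -> _ R1 D1]]].
  move=> /parse_tree_lang [l2 [r2 [W2 -> _ R2 D2]]].
  congr start_tree; apply: start_alts_inj W1 W2 _ => w.
  by rewrite -D1 -D2; exact: (reads_lang_eq R1 R2 w).
- by move=> s [t /parse_tree_lang [l [r [_ _ _ R _]]]]; exists r.
- move=> s1 s2 r1 r2 [t1 /parse_tree_lang [l1 [q1 [W1 _ -> R1 D1]]]].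
  move=> [t2 /parse_tree_lang [l2 [q2 [W2 _ -> R2 D2]]]] ne H1 H2 E.
  apply: ne; congr print_alts; apply: start_alts_inj W1 W2 _ => w.
  by rewrite -D1 -D2 -(reads_lang_eq H1 R1) -(reads_lang_eq H2 R2).
Qed.
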